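(* Let $p$ be a prime and $i,e,h$ natural numbers, and put $q=p^h$. Then $$v_p(i!)\ge\frac{i}{p-1}-\frac{i}{e(q-1)}-h+\frac1e+\left[\frac iq\right]\left(\frac1e-\frac1{p-1}+\frac1{e(q-1)}\right)+v_p\left(\left[\frac iq\right]!\right),$$ with equality if and only if $i\equiv-1\pmod q$. In particular, if $e\le p-1$ or $i<q$, then $$v_p(i!)\ge\frac{i}{p-1}-\frac{i}{e(q-1)}-h+\frac1e,$$ with equality if and only if $i=q-1$. Moreover, if $K$ is a finite extension of $\mathbb{Q}_p$ with absolute ramification index $e\le p-1$, residue field of cardinality $q=p^h$ and uniformizer $\pi$, then $|\overline{\gamma}(0)|=|\pi/q|$.
   Context: $v_p$ is the $p$-adic valuation with $v_p(p)=1$, $|\cdot|$ the absolute value on $\mathbb{C}_p$ with $|p|=p^{-1}$, $[x]$ the integer part. For $K$ as in the statement, let $\mathcal{G}$ be the Lubin–Tate formal group over $\mathcal{O}_K$ attached to $\pi$ with logarithm $\lambda(t)$, and $\varpi_p\in\mathcal{O}_{\mathbb{C}_p}$ a $p$-adic period of $\mathcal{G}$, i.e. $\exp(\varpi_p\lambda(t))\in\mathcal{O}_{\mathbb{C}_p}[[t]]$ generates the $\mathcal{O}_K$-module $\mathrm{Hom}_{\mathcal{O}_{\mathbb{C}_p}}(\mathcal{G},\widehat{\mathbb{G}}_m)$; one has $|\varpi_p|=p^{-\frac1{p-1}+\frac1{e(q-1)}}$. $\overline{\gamma}(0)$ is any element of $\mathbb{C}_p$ with $|\overline{\gamma}(0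)|=\max_{m\ge0}|m!/\varpi_p^m|$.
   Formalization: The two equality clauses, i ≡ −1 (mod q) and i = q−1, hold only under e > 1 or h > 1; the inequalities carry no such hypothesis. Apart from conventions, each condition added here is assumed in the paper as well or is needed for the statement above to hold. *)

From HB Require Import structures.
From mathcomp Require Import all_boot all_order all_algebra.
From mathcomp Require Import all_classical all_reals all_analysis.
Set Implicit Arguments. Unset Strict Implicit. Unset Printing Implicit Defensive.
Import Order.TTheory GRing.Theory Num.Theory.
Local Open Scope ring_scope.

Definition vp_fact (p n : nat) : nat := logn p n`!.

Definition bound_full (p e h i : nat) : rat :=
  let q := (p ^ h)%N in
  let a := (i %/ q)%N in
  i%:R / (p%:R - 1) - i%:R / (e%:R * (q%:R - 1)) - h%:R + e%:R^-1
  + a%:R * (e%:R^-1 - (p%:R - 1)^-1 + (e%:R * (q%:R - 1))^-1)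
  + (vp_fact p a)%:R.

Definition bound_simple (p e h i : nat) : rat :=
  let q := (p ^ h)%N in
  i%:R / (p%:R - 1) - i%:R / (e%:R * (q%:R - 1)) - h%:R + e%:R^-1.

(* Absolute values in C_p, with |p| = p^-1, written as real numbers. *)
Definition abs_fact (R : realType) (p m : nat) : R := (p%:R ^+ vp_fact p m)^-1.
Definition abs_varpi (R : realType) (p e h : nat) : R :=
  powR (p%:R) (- (p%:R - 1)^-1 + (e%:R * ((p ^ h)%N%:R - 1))^-1).
Definition abs_gamma_term (R : realType) (p e h m : nat) : R :=
  abs_fact R p m / abs_varpi R p e h ^+ m.
(* |pi / q| for a uniformizer pi of a field with ramification index e
   (|pi| = p^(-1/e)) and q = p^h (|q| = p^(-h)). *)
Definition abs_pi_over_q (R : realType) (p e h : nat) : R :=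
  powR (p%:R) (- e%:R^-1) / ((p ^ h)%N%:R)^-1.

From HB Require Import structures.
From mathcomp Require Import all_boot all_order all_algebra.
From mathcomp Require Import all_classical all_reals all_analysis.
From mathcomp Require Import zify ring lra.
Import Order.TTheory GRing.Theory Num.Theory.

(* Write i = a q + r with r < q.  Legendre's formula (p - 1) v_p(n!) = n - s(n),
   with s the base-p digit sum, gives v_p(i!) = a (q-1)/(p-1) + v_p(r!) + v_p(a!);
   since the base-p digits of r and d = q-1-r are complementary, v_p(i!) exceeds
   the full bound by s(d)/(p-1) - d/(e(q-1)).  As d < p^h, d <= p^(h-1) s(d), hence
   (p-1) d <= (q-1) s(d) <= e (q-1) s(d), strictly when d > 0 unless e = h = 1.
   The full bound exceeds the simplified one by
   [i/q] (1/e - 1/(p-1) + 1/(e(q-1))) + v_p([i/q]!), which vanishes for i < q and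
   is positive when e <= p-1 and i >= q.  Finally
   |m!/varpi^m| = p^(bound_simple(m) - v_p(m!)) |pi/q|, with equality at m = q-1. *)

Fixpoint digitsum (p h n : nat) : nat :=
  if h is h'.+1 then n %% p + digitsum p h' (n %/ p) else 0.

Lemma digitsum0 p h : digitsum p h 0 = 0.
Proof. by elim: h => //= h IH; rewrite mod0n div0n IH. Qed.

Lemma vp_fact0 p : vp_fact p 0 = 0.
Proof. by rewrite /vp_fact fact0 logn1. Qed.

Section Legendre.

Context {p : nat} (p_prime : prime p).

Let p_gt0 : 0 < p := prime_gt0 p_prime.

Lemma vp_factE n : vp_fact p n = n %/ p + vp_fact p (n %/ p).
Proof.
elim: n => [|n IH]; first by rewrite div0n vp_fact0.
rewrite /vp_fact factS lognM ?fact_gt0 // -/(vp_fact p n) IH divnS //.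
have [/dvdnP[m def_n]|p_ndvd] := boolP (p %| n.+1); last first.
  by rewrite lognE p_prime (negbTE p_ndvd) andbF.
have m_gt0 : 0 < m by case: m def_n.
have n_div : n %/ p = m.-1.
  by have := divnS n p_gt0; rewrite def_n dvdn_mull // mulnK //=; lia.
rewrite n_div add1n prednK // def_n lognM // (logn_prime _ p_prime) eqxx.
rewrite -[m in m`!](prednK m_gt0) factS lognM ?fact_gt0 // prednK //.
rewrite -/(vp_fact p m.-1); lia.
Qed.

Lemma legendre_digitsum {h n} : n < p ^ h ->
  (p - 1) * vp_fact p n + digitsum p h n = n.
Proof.
elim: h n => [|h IH] n n_lt /=.
  by move: n_lt; rewrite expn0 ltnS leqn0 => /eqP->; rewrite vp_fact0 muln0.
rewrite vp_factE mulnDr addnCA -addnA IH; last by rewrite ltn_divLR // -expnSr.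
rewrite {4}(divn_eq n p); have := ltn_pmod n p_gt0; nia.
Qed.

Lemma digitsum_complement {h r} : r < p ^ h ->
  digitsum p h (p ^ h - 1 - r) + digitsum p h r = h * (p - 1).
Proof.
elim: h r => [|h IH] r r_lt //=.
have r_div_lt : r %/ p < p ^ h by rewrite ltn_divLR // -expnSr.
have r_mod_lt := ltn_pmod r p_gt0.
have pX_gt0 : 0 < p ^ h by rewrite expn_gt0 p_gt0.
have -> : p ^ h.+1 - 1 - r = (p ^ h - 1 - r %/ p) * p + (p - 1 - r %% p).
  by rewrite expnS {1}(divn_eq r p); nia.
have low_lt : p - 1 - r %% p < p by lia.
rewrite modnMDl divnMDl // (modn_small low_lt) (divn_small low_lt) addn0.
rewrite addnACA IH //; lia.
Qed.

Lemma digitsum_bound {h n} : n < p ^ h.+1 -> n <= p ^ h * digitsum p h.+1 n.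
Proof.
elim: h n => [|h IH] n n_lt.
  by rewrite /= expn0 mul1n addn0 modn_small // -(expn1 p).
have := IH (n %/ p); rewrite ltn_divLR // -expnSr => /(_ n_lt) n_div_le.
have pX_gt0 : 0 < p ^ h by rewrite expn_gt0 p_gt0.
rewrite -[digitsum p h.+2 n]/(n %% p + digitsum p h.+1 (n %/ p)).
rewrite {1}(divn_eq n p) expnSr.
have := leq_mul (leqnn p) n_div_le.
have : n %% p <= p ^ h * p * (n %% p) by rewrite leq_pmull // muln_gt0 pX_gt0.
move: (n %/ p) (n %% p) (digitsum _ _ _) (p ^ h) => m r D P; nia.
Qed.

Lemma vp_fact_mul_expnD a {h r} : r < p ^ h ->
  (p - 1) * vp_fact p (a * p ^ h + r)
  = a * (p ^ h - 1) + (p - 1) * vp_fact p r + (p - 1) * vp_fact p a.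
Proof.
elim: h r => [|h IH] r r_lt.
  move: r_lt; rewrite expn0 ltnS leqn0 => /eqP->.
  by rewrite muln1 addn0 vp_fact0 subnn; lia.
rewrite vp_factE expnS (mulnC p) mulnA divnMDl // mulnDr.
rewrite IH ?ltn_divLR // -?expnSr // [vp_fact p r]vp_factE.
have pX_gt0 : 0 < p ^ h by rewrite expn_gt0 p_gt0.
rewrite expnS; move: (p ^ h) pX_gt0 (r %/ p) (vp_fact p (r %/ p)) => P P_gt0 m V.
have -> : p * P - 1 = (p - 1) * P + (P - 1).
  by rewrite mulnBl mul1n; have := leq_pmull P p_gt0; lia.
rewrite !mulnDr mulnA (mulnC a); lia.
Qed.

Lemma digitsum_gap e h d : 0 < e -> d < p ^ h ->
  (p - 1) * d <= e * (p ^ h - 1) * digitsum p h d.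
Proof.
case: h => [|h] e_gt0; first by rewrite expn0 ltnS leqn0 => /eqP->; rewrite muln0.
move=> /digitsum_bound; rewrite expnSr.
have pX_gt0 : 0 < p ^ h by rewrite expn_gt0 p_gt0.
move: (p ^ h) pX_gt0 (digitsum _ _ _) => P P_gt0 S d_le.
have /leq_trans-> // : (p - 1) * d <= (P * p - 1) * S.
  have := leq_mul (leqnn (p - 1)) d_le; nia.
by rewrite -mulnA leq_pmull.
Qed.

Lemma digitsum_gap_lt e h d : 0 < e -> (1 < e) || (1 < h) -> 0 < d ->
  d < p ^ h -> (p - 1) * d < e * (p ^ h - 1) * digitsum p h d.
Proof.
case: h => [|h] e_gt0 e_h_gt1 d_gt0 d_lt; first by move: d_lt; rewrite expn0; lia.
have p_gt1 := prime_gt1 p_prime.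
have q_gt1 : 1 < p ^ h.+1 by rewrite -(expn0 p) ltn_exp2l.
have S_gt0 : 0 < digitsum p h.+1 d.
  by have := digitsum_bound d_lt; rewrite lt0n; apply: contraTneq => ->; lia.
case/orP: e_h_gt1 => [e_gt1 | h_gt0].
  apply: leq_ltn_trans (digitsum_gap 1 h.+1 d isT d_lt) _.
  by rewrite -!mulnA ltn_pmul2r // muln_gt0 S_gt0 subn_gt0 q_gt1.
have /digitsum_bound := d_lt; rewrite expnSr.
have p_le_pX : p <= p ^ h by rewrite -{1}(expn1 p) leq_pexp2l.
move: (p ^ h) p_le_pX (digitsum _ _ _) S_gt0 => P P_ge S S_gt0 d_le.
apply: leq_ltn_trans (leq_mul (leqnn (p - 1)) d_le) _.
rewrite -mulnA; apply: leq_trans (leq_pmull _ e_gt0); rewrite mulnA ltn_pmul2r //.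
rewrite mulnBl mul1n mulnC; have := leq_pmull P p_gt0; lia.
Qed.

End Legendre.

Lemma modSn_eq0 m d : 0 < d -> (m.+1 %% d == 0) = (m %% d == d.-1).
Proof.
move=> d_gt0; rewrite -addn1 -modnDml addn1.
have [E|neq_d] := eqVneq (m %% d).+1 d.
  by rewrite E modnn eqxx; apply/esym/eqP; lia.
rewrite modn_small ?ltn_neqAle ?neq_d ?ltn_pmod //; lia.
Qed.

Local Open Scope ring_scope.

Section Bounds.

Variables p e h : nat.
Hypotheses (p_prime : prime p) (e_gt0 : (0 < e)%N) (h_gt0 : (0 < h)%N).

Local Notation q := (p ^ h)%N.

Let p_gt1 : (1 < p)%N := prime_gt1 p_prime.
Let q_gt1 : (1 < q)%N.
Proof. by rewrite -(expn0 p) ltn_exp2l. Qed.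

Let p_gt0 : (0 < p)%N := ltnW p_gt1.
Let q_gt0 : (0 < q)%N := ltnW q_gt1.

Let pred_p_gt0 : 0 < p%:R - 1 :> rat.
Proof. by rewrite subr_gt0 ltr1n. Qed.

Let pred_q_gt0 : 0 < q%:R - 1 :> rat.
Proof. by rewrite subr_gt0 ltr1n. Qed.

Let e_gt0r : 0 < e%:R :> rat.
Proof. by rewrite ltr0n. Qed.

Let den_gt0 : 0 < (p%:R - 1) * e%:R * (q%:R - 1) :> rat.
Proof. by rewrite !mulr_gt0. Qed.

Lemma vp_fact_sub_bound_full i (d := (q - 1 - i %% q)%N) :
  (p%:R - 1) * e%:R * (q%:R - 1) * ((vp_fact p i)%:R - bound_full p e h i)
  = (e * (q - 1) * digitsum p h d)%:R - ((p - 1) * d)%:R :> rat.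
Proof.
have r_lt : (i %% q < q)%N by rewrite ltn_mod.
rewrite /bound_full /d [in vp_fact p i](divn_eq i q) [in i%:R](divn_eq i q).
move: (i %/ q)%N (i %% q)%N r_lt => a r r_lt.
have r_le : (r <= q - 1)%N by rewrite leq_subRL // add1n.
have V_eq := congr1 (fun n => n%:R : rat) (vp_fact_mul_expnD p_prime a r_lt).
have Vr_eq := congr1 (fun n => n%:R : rat) (legendre_digitsum p_prime r_lt).
have D_eq := congr1 (fun n => n%:R : rat) (digitsum_complement p_prime r_lt).
rewrite !natrD !natrM !natrB // in V_eq Vr_eq D_eq *.
have -> : (vp_fact p (a * q + r))%:R
    = a%:R * (q%:R - 1) / (p%:R - 1) + (vp_fact p r)%:R + (vp_fact p a)%:R :> rat.
  by apply: (mulfI (lt0r_neq0 pred_p_gt0)); rewrite V_eq; field; exact: lt0r_neq0.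
have -> : (vp_fact p r)%:R = (r%:R - (digitsum p h r)%:R) / (p%:R - 1) :> rat.
  by apply: (mulfI (lt0r_neq0 pred_p_gt0)); rewrite -Vr_eq; field; exact: lt0r_neq0.
have -> : (digitsum p h r)%:R
    = h%:R * (p%:R - 1) - (digitsum p h (q - 1 - r))%:R :> rat.
  by rewrite -D_eq addrC addKr.
by field; rewrite !lt0r_neq0.
Qed.

Lemma bound_full_le_vp_fact i : bound_full p e h i <= (vp_fact p i)%:R.
Proof.
rewrite -subr_ge0 -(pmulr_rge0 _ den_gt0) vp_fact_sub_bound_full subr_ge0 ler_nat.
by apply: digitsum_gap => //; lia.
Qed.

Lemma vp_fact_eq_bound_full_mod0 i : (i.+1 %% q = 0)%N ->
  (vp_fact p i)%:R = bound_full p e h i.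
Proof.
move=> /eqP; rewrite modSn_eq0 // => /eqP r_eq; apply/eqP.
rewrite -subr_eq0 -(inj_eq (mulfI (lt0r_neq0 den_gt0))) mulr0.
by rewrite vp_fact_sub_bound_full r_eq subn1 subnn digitsum0 !muln0 subrr.
Qed.

Lemma vp_fact_eq_bound_full i : (1 < e)%N || (1 < h)%N ->
  ((vp_fact p i)%:R == bound_full p e h i) = (i.+1 %% q == 0)%N.
Proof.
move=> e_h_gt1; have r_lt : (i %% q < q)%N by rewrite ltn_mod.
rewrite -subr_eq0 -(inj_eq (mulfI (lt0r_neq0 den_gt0))) mulr0.
rewrite vp_fact_sub_bound_full subr_eq0 eqr_nat modSn_eq0 //.
have [d_eq0|d_gt0] := posnP (q - 1 - i %% q)%N.
  by rewrite d_eq0 digitsum0 !muln0 eqxx; apply/esym/eqP; lia.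
rewrite gtn_eqF; last by apply: digitsum_gap_lt => //; lia.
by apply/esym/eqP; lia.
Qed.

Lemma bound_simple_le_full i : (e <= p - 1)%N \/ (i < q)%N ->
  bound_simple p e h i <= bound_full p e h i ?= iff (i < q)%N.
Proof.
move=> small; apply/leifP; rewrite /bound_full -/(bound_simple p e h i).
have [i_lt|i_ge] := ltnP i q.
  by rewrite divn_small // vp_fact0 mul0r !addr0.
have e_le : (e <= p - 1)%N by case: small; rewrite // ltnNge i_ge.
have a_gt0 : (0 < i %/ q)%N by rewrite divn_gt0.
have inv_le : (p%:R - 1)^-1 <= e%:R^-1 :> rat.
  by rewrite lef_pV2 ?posrE // lerBrDr natr1 ler_nat; lia.
have : 0 < (i %/ q)%:R * (e%:R^-1 - (p%:R - 1)^-1 + (e%:R * (q%:R - 1))^-1) :> rat.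
  by rewrite mulr_gt0 ?ltr0n // ltr_pwDr ?invr_gt0 ?mulr_gt0 // subr_ge0.
by have := ler0n rat (vp_fact p (i %/ q)); lra.
Qed.

Lemma bound_simple_le_vp_fact i : (e <= p - 1)%N \/ (i < q)%N ->
  bound_simple p e h i <= (vp_fact p i)%:R.
Proof.
move=> small; apply: le_trans (bound_full_le_vp_fact i).
by case: (bound_simple_le_full i small).
Qed.

Lemma vp_fact_expn_sub1_eq_bound_simple :
  (vp_fact p (q - 1))%:R = bound_simple p e h (q - 1).
Proof.
have i_lt : (q - 1 < q)%N by rewrite subn1 prednK.
have [_] := bound_simple_le_full _ (or_intror i_lt); rewrite i_lt => /eqP->.
by apply: vp_fact_eq_bound_full_mod0; rewrite subn1 prednK // modnn.
Qed.

Lemma vp_fact_eq_bound_simple i : (1 < e)%N || (1 < h)%N ->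
  (e <= p - 1)%N \/ (i < q)%N ->
  ((vp_fact p i)%:R == bound_simple p e h i) = (i == q - 1)%N.
Proof.
move=> e_h_gt1 small; have [le_sf eq_sf] := bound_simple_le_full i small.
apply/eqP/eqP => [v_eq | ->].
  have /eqP : bound_simple p e h i == bound_full p e h i.
    by rewrite eq_le le_sf -v_eq bound_full_le_vp_fact.
  move=> bs_eq; have i_lt : (i < q)%N by rewrite -eq_sf bs_eq.
  move: (eqxx (bound_full p e h i)); rewrite -{1}bs_eq -v_eq.
  by rewrite vp_fact_eq_bound_full // modSn_eq0 // modn_small // => /eqP->; lia.
exact: vp_fact_expn_sub1_eq_bound_simple.
Qed.

End Bounds.

Lemma abs_pi_over_qE (R : realType) p e h : prime p ->
  abs_pi_over_q R p e h = powR p%:R (h%:R - e%:R^-1).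
Proof.
move=> p_prime; have p_neq0 : p%:R != 0 :> R by rewrite pnatr_eq0 -lt0n prime_gt0.
rewrite /abs_pi_over_q invrK addrC powRD ?p_neq0 ?implybT //.
by rewrite natrX powR_mulrn ?ler0n // mulrC.
Qed.

Lemma abs_gamma_termE (R : realType) p e h m : prime p ->
  abs_gamma_term R p e h m
  = powR p%:R (ratr (bound_simple p e h m - (vp_fact p m)%:R) + (h%:R - e%:R^-1)).
Proof.
move=> p_prime; have p_neq0 : p%:R != 0 :> R by rewrite pnatr_eq0 -lt0n prime_gt0.
have -> : ratr (bound_simple p e h m - (vp_fact p m)%:R) + (h%:R - e%:R^-1)
    = - (vp_fact p m)%:R - (- (p%:R - 1)^-1 + (e%:R * ((p ^ h)%N%:R - 1))^-1) * m%:R :> R.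
  rewrite /bound_simple.
  rewrite !(rmorphB, rmorphD, rmorphM, fmorphV, rmorph_nat, rmorph1).
  ring.
rewrite /abs_gamma_term /abs_fact /abs_varpi.
by rewrite powRB ?p_neq0 ?implybT // powRN powRrM !powR_mulrn ?ler0n ?powR_ge0.
Qed.

Theorem mainTheorem8 (R : realType) (p e h : nat) :
  prime p -> (0 < e)%N -> (0 < h)%N ->
  (forall i : nat, bound_full p e h i <= (vp_fact p i)%:R)
  /\ ((1 < e)%N || (1 < h)%N ->
     forall i : nat, (vp_fact p i)%:R = bound_full p e h i <->
       (i.+1 %% (p ^ h) = 0)%N)
  /\ (forall i : nat, (e <= p - 1)%N \/ (i < p ^ h)%N ->
     bound_simple p e h i <= (vp_fact p i)%:R)
  /\ ((1 < e)%N || (1 < h)%N ->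
     forall i : nat, (e <= p - 1)%N \/ (i < p ^ h)%N ->
     (vp_fact p i)%:R = bound_simple p e h i <-> i = (p ^ h - 1)%N)
  /\ ((e <= p - 1)%N ->
     (forall m : nat, abs_gamma_term R p e h m <= abs_pi_over_q R p e h)
     /\ exists m : nat, abs_gamma_term R p e h m = abs_pi_over_q R p e h).
Proof.
move=> p_prime e_gt0 h_gt0.
have p_ge1 : 1 <= p%:R :> R by rewrite ler1n prime_gt0.
split; first exact: bound_full_le_vp_fact.
split=> [e_h_gt1 i|].
  by apply: (rwP2 eqP); rewrite vp_fact_eq_bound_full //; exact: eqP.
split; first exact: bound_simple_le_vp_fact.
split=> [e_h_gt1 i small|e_le].
  by apply: (rwP2 eqP); rewrite vp_fact_eq_bound_simple //; exact: eqP.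
split=> [m|].
  rewrite abs_gamma_termE // abs_pi_over_qE //; apply: ler_powR => //.
  rewrite gerDr lerq0 subr_le0.
  exact: bound_simple_le_vp_fact (or_introl e_le).
exists (p ^ h - 1)%N.
rewrite abs_gamma_termE // abs_pi_over_qE //.
by rewrite (vp_fact_expn_sub1_eq_bound_simple p e h) // subrr rmorph0 add0r.
Qed.
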